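(* If $\mathcal{O}$ is a strongly decomposable set of upwards closed modalities, then $\mathcal{O}$ is decomposable.
   Context: $\Sigma$ is a signature of effect operations with arities $\alpha^n\to\alpha$, $\mathbf{N}\times\alpha^n\to\alpha$, $\alpha^{\mathbf{N}}\to\alpha$ or $\mathbf{N}\times\alpha^{\mathbf{N}}\to\alpha$. $TX$ is the set of possibly infinite labelled trees with leaves $\bot$ or elements of $X$ and internal nodes labelled by operations (or $\sigma_m$, $m\in\mathbb{N}$) with children according to arity; $t\le t'$ iff $t$ is obtained from $t'$ by replacing subtrees with $\bot$. $\mu:TTX\to TX$ replaces each leaf of a tree of trees by that tree. $\mathbf{1}=\{*\}$. A set $\mathcal{O}$ of modalities is given with $[\![o]\!]\subseteq T\mathbf{1}$; upwards closed means $[\![o]\!]$ is upward closed under $\le$. $t[\in P]\in T\mathbf{1}$ replaces leaves in $P$ by $*$ and other $X$-leaves by $\bot$; $o(A)=\{t\in TX\mid t[\in A]\in[\![o]\!]\}$. $\mathcal{T}$ is the least class of formulas containing $o(\top),o(\bot)$ ($o\in\mathcal{O}$) closed under arbitrary $\bigvee,\bigwedge$, with $[\![o(\top)]\!]=o(\{*\})$, $[\![o(\bot)]\!]=o(\emptyset)$, unions/intersections. $t\trianglelefteq t'$ iff $\forall\Phi\in\mathcal{T}$, $t\in[\![\Phi]\!]\Rightarrow t'\in[\![\Phi]\!]$; for $r,r'\in TT\mathbf{1}$, $r\preccurlyeq r'$ iff $\forall o\,\forall\Phi\in\mathcal{T}$, $r\in o([\![\Phi]\!])\Rightarrow r'\in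 o([\![\Phi]\!])$. $\mathcal{O}$ is decomposable if $r\preccurlyeq r'$ implies $\mu r\trianglelefteq\mu r'$. $\mathcal{O}$ is strongly decomposable if for every $r\in TT\mathbf{1}$ and $o\in\mathcal{O}$ with $\mu r\in o(\{*\})$ there is a collection $\{(o_i,o_i')\}_{i\in I}$ of pairs of modalities in $\mathcal{O}$ such that (1) $r\in o_i(o_i'(\{*\}))$ for all $i\in I$, and (2) for every $r'\in TT\mathbf{1}$, if $r'\in o_i(o_i'(\{*\}))$ for all $i\in I$ then $\mu r'\in o(\{*\})$. *)

From Stdlib Require Import ClassicalEpsilon.

Set Implicit Arguments.
Unset Strict Implicit.

(* A signature: operations, each with a flag saying whether it takes a natural
   number parameter (arities N x a^n -> a, N x a^N -> a), and an arity:
   [Some n] = n children (a^n), [None] = countably many children (a^N). *)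
Record signature := Signature {
  op :> Type;
  op_param : op -> bool;
  op_arity : op -> option nat
}.

Definition param_t (S : signature) (o : op S) : Type :=
  if @op_param S o then nat else unit.

Definition arity_t (S : signature) (o : op S) : Type :=
  match @op_arity S o with
  | Some n => { i : nat | i < n }
  | None => nat
  end.

CoInductive tree (S : signature) (X : Type) : Type :=
| Bot : tree S X
| Leaf : X -> tree S X
| Node : forall o : op S, param_t o -> (arity_t o -> tree S X) -> tree S X.

Arguments Bot {S X}.
Arguments Leaf {S X} _.
Arguments Node {S X} _ _ _.

CoInductive tle (S : signature) (X : Type) : tree S X -> tree S X -> Prop :=
| tle_bot : forall t, tle Bot t
| tle_leaf : forall x, tle (Leaf x) (Leaf x)
| tle_node : forall o m ch ch',
    (forall i, tle (ch i) (ch' i)) -> tle (Node o m ch) (Node o m ch').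

(* the unit set 1 = {*} is Rocq's [unit], * = tt *)

CoFixpoint mu (S : signature) (X : Type) (r : tree S (tree S X)) : tree S X :=
  match r with
  | Bot => Bot
  | Leaf t => t
  | Node o m ch => Node o m (fun i => mu (ch i))
  end.

CoFixpoint tsel (S : signature) (X : Type) (P : X -> Prop) (t : tree S X)
  : tree S unit :=
  match t with
  | Bot => Bot
  | Leaf x => if excluded_middle_informative (P x) then Leaf tt else Bot
  | Node o m ch => Node o m (fun i => tsel P (ch i))
  end.

(* Modalities: an index type [M] with an interpretation [sem o] subset of T 1.
   o(A) = { t in T X | t[in A] in [[o]] } *)
Definition omod (S : signature) (M : Type) (sem : M -> tree S unit -> Prop)
  (X : Type) (o : M) (A : X -> Prop) : tree S X -> Prop :=
  fun t => sem o (tsel A t).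

Definition upwards_closed (S : signature) (M : Type)
  (sem : M -> tree S unit -> Prop) : Prop :=
  forall o t t', tle t t' -> sem o t -> sem o t'.

Inductive formula (M : Type) : Type :=
| FTop : M -> formula M
| FBot : M -> formula M
| FOr : forall I : Type, (I -> formula M) -> formula M
| FAnd : forall I : Type, (I -> formula M) -> formula M.

Fixpoint fsem (S : signature) (M : Type) (sem : M -> tree S unit -> Prop)
  (F : formula M) : tree S unit -> Prop :=
  match F with
  | FTop o => omod sem o (fun _ : unit => True)
  | FBot o => omod sem o (fun _ : unit => False)
  | @FOr _ J f => fun t => exists i : J, fsem sem (f i) t
  | @FAnd _ J f => fun t => forall i : J, fsem sem (f i) t
  end.

Definition tri (S : signature) (M : Type) (sem : M -> tree S unit -> Prop)
  (t t' : tree S unit) : Prop :=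
  forall F : formula M, fsem sem F t -> fsem sem F t'.

Definition prec (S : signature) (M : Type) (sem : M -> tree S unit -> Prop)
  (r r' : tree S (tree S unit)) : Prop :=
  forall (o : M) (F : formula M),
    omod sem o (fsem sem F) r -> omod sem o (fsem sem F) r'.

Definition decomposable (S : signature) (M : Type)
  (sem : M -> tree S unit -> Prop) : Prop :=
  forall r r' : tree S (tree S unit),
    prec sem r r' -> tri sem (mu r) (mu r').

Definition strongly_decomposable (S : signature) (M : Type)
  (sem : M -> tree S unit -> Prop) : Prop :=
  forall (r : tree S (tree S unit)) (o : M),
    omod sem o (fun _ : unit => True) (mu r) ->
    exists (I : Type) (p : I -> M * M),
      (forall i : I,
         omod sem (fst (p i)) (omod sem (snd (p i)) (fun _ : unit => True)) r) /\
      (forall r' : tree S (tree S unit),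
         (forall i : I,
            omod sem (fst (p i)) (omod sem (snd (p i)) (fun _ : unit => True)) r') ->
         omod sem o (fun _ : unit => True) (mu r')).

(* For [o(⊤)],
   strong decomposability reduces [μ r' ∈ o(⊤)] to the tests
   [r' ∈ o_i(o_i'(⊤))], and these follow from [r ≼ r'].  The case [o(⊥)]
   is reduced to the case [o(⊤)] by first replacing every leaf of the inner
   trees by ⊥: then [μ r ∈ o(∅)] becomes [μ r₀ ∈ o({*})] for the pruned
   [r₀], and the tests [r₀ ∈ o_i(o_i'(⊤))] become [r ∈ o_i(o_i'(∅))], which
   again follow from [r ≼ r']. *)
From Stdlib Require Import ClassicalEpsilon.

Set Implicit Arguments.

Section Trees.

Variable S : signature.

CoFixpoint tree_map (X Y : Type) (f : X -> Y) (t : tree S X) : tree S Y :=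
  match t with
  | Bot => Bot
  | Leaf x => Leaf (f x)
  | Node o m ch => Node o m (fun i => tree_map f (ch i))
  end.

CoInductive bisim (X : Type) : tree S X -> tree S X -> Prop :=
| bisim_bot : bisim Bot Bot
| bisim_leaf : forall x, bisim (Leaf x) (Leaf x)
| bisim_node : forall o m ch ch',
    (forall i, bisim (ch i) (ch' i)) -> bisim (Node o m ch) (Node o m ch').

Lemma tree_unfold (X : Type) (t : tree S X) :
  t = match t with
      | Bot => Bot
      | Leaf x => Leaf x
      | Node o m ch => Node o m ch
      end.
Proof. destruct t; reflexivity. Qed.

Lemma bisim_refl (X : Type) : forall t : tree S X, bisim t t.
Proof. cofix CH. intros [|x|o m ch]; constructor. intro i. apply CH. Qed.

Lemma bisim_sym (X : Type) : forall t t' : tree S X, bisim t t' -> bisim t' t.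
Proof.
  cofix CH. intros t t' H. destruct H; constructor. intro i. apply CH; auto.
Qed.

Lemma bisim_tle (X : Type) : forall t t' : tree S X, bisim t t' -> tle t t'.
Proof.
  cofix CH. intros t t' H. destruct H; constructor. intro i. apply CH; auto.
Qed.

Lemma tsel_ext (X : Type) (P Q : X -> Prop) :
  (forall x, P x <-> Q x) -> forall t : tree S X, bisim (tsel P t) (tsel Q t).
Proof.
  intro HPQ. cofix CH. intro t.
  rewrite (tree_unfold (tsel P t)), (tree_unfold (tsel Q t)).
  destruct t as [|x|o m ch]; simpl.
  - constructor.
  - destruct (excluded_middle_informative (P x)) as [HP|HP],
      (excluded_middle_informative (Q x)) as [HQ|HQ];
      try constructor; exfalso; firstorder.
  - constructor. intro i. apply CH.
Qed.

Lemma tsel_mu (X : Type) (P : X -> Prop) : forall r : tree S (tree S X),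
  bisim (tsel P (mu r)) (mu (tree_map (tsel P) r)).
Proof.
  cofix CH. intro r.
  rewrite (tree_unfold (tsel P (mu r))), (tree_unfold (mu (tree_map (tsel P) r))).
  destruct r as [|t|o m ch]; simpl.
  - constructor.
  - apply bisim_refl.
  - constructor. intro i. apply CH.
Qed.

Lemma tsel_map (X Y : Type) (P : Y -> Prop) (f : X -> Y) : forall t : tree S X,
  bisim (tsel P (tree_map f t)) (tsel (fun x => P (f x)) t).
Proof.
  cofix CH. intro t.
  rewrite (tree_unfold (tsel P (tree_map f t))),
    (tree_unfold (tsel (fun x => P (f x)) t)).
  destruct t as [|x|o m ch]; simpl.
  - constructor.
  - apply bisim_refl.
  - constructor. intro i. apply CH.
Qed.

Lemma tsel_True_unit : forall t : tree S unit, bisim (tsel (fun _ => True) t) t.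
Proof.
  cofix CH. intro t.
  rewrite (tree_unfold (tsel (fun _ => True) t)).
  destruct t as [|[]|o m ch]; simpl.
  - constructor.
  - destruct (excluded_middle_informative True) as [_|HF];
      [constructor | contradiction (HF I)].
  - constructor. intro i. apply CH.
Qed.

Definition prune (r : tree S (tree S unit)) : tree S (tree S unit) :=
  tree_map (tsel (fun _ : unit => False)) r.

End Trees.

(* Coinductive trees are not extensional in Rocq, so bisimilar trees need not
   be equal; upward closure is used only to make the modalities respect
   bisimilarity. *)
Lemma upwards_closed_bisim (S : signature) (M : Type)
  (sem : M -> tree S unit -> Prop) :
  upwards_closed sem -> forall o t t', bisim t t' -> sem o t -> sem o t'.
Proof. intros Hup o t t' H. apply Hup, bisim_tle, H. Qed.

Section Modalities.

Variables (S : signature) (M : Type) (sem : M -> tree S unit -> Prop).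
Hypothesis sem_bisim : forall o t t', bisim t t' -> sem o t -> sem o t'.

Let sem_bisim_iff o t t' : bisim t t' -> sem o t <-> sem o t'.
Proof. split; apply sem_bisim; [|apply bisim_sym]; assumption. Qed.

Let top := fun _ : unit => True.
Let bot := fun _ : unit => False.

Lemma omod_ext (X : Type) o (P Q : X -> Prop) t :
  (forall x, P x <-> Q x) -> omod sem o P t <-> omod sem o Q t.
Proof. intro HPQ. apply sem_bisim_iff, tsel_ext, HPQ. Qed.

Lemma omod_map (X Y : Type) o (P : Y -> Prop) (f : X -> Y) t :
  omod sem o P (tree_map f t) <-> omod sem o (fun x => P (f x)) t.
Proof. apply sem_bisim_iff, tsel_map. Qed.

Lemma omod_top_unit o t : omod sem o top t <-> sem o t.
Proof. apply sem_bisim_iff, tsel_True_unit. Qed.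

Lemma omod_bot_mu o r : omod sem o bot (mu r) <-> omod sem o top (mu (prune r)).
Proof.
  unfold omod at 1. rewrite (sem_bisim_iff o (tsel_mu bot r)).
  symmetry. apply omod_top_unit.
Qed.

Lemma omod_prune o o' r :
  omod sem o (omod sem o' top) (prune r) <-> omod sem o (omod sem o' bot) r.
Proof.
  unfold prune. rewrite omod_map.
  apply omod_ext. intro t. apply omod_top_unit.
Qed.

Hypothesis sem_sdec : strongly_decomposable sem.

Lemma strongly_decomposable_mu_top r r' o :
  (forall o1 o2, omod sem o1 (omod sem o2 top) r ->
                 omod sem o1 (omod sem o2 top) r') ->
  omod sem o top (mu r) -> omod sem o top (mu r').
Proof.
  intros Htests Hr.
  destruct (sem_sdec r Hr) as (I & p & Hr_tests & Hsuff).
  apply Hsuff. intro i. apply Htests, Hr_tests.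
Qed.

Lemma prec_mu_top r r' o :
  prec sem r r' -> omod sem o top (mu r) -> omod sem o top (mu r').
Proof.
  intro Hprec. apply strongly_decomposable_mu_top.
  intros o1 o2. apply (Hprec o1 (FTop o2)).
Qed.

Lemma prec_mu_bot r r' o :
  prec sem r r' -> omod sem o bot (mu r) -> omod sem o bot (mu r').
Proof.
  intro Hprec. rewrite !omod_bot_mu. apply strongly_decomposable_mu_top.
  intros o1 o2. rewrite !omod_prune. apply (Hprec o1 (FBot o2)).
Qed.

Lemma strongly_decomposable_decomposable : decomposable sem.
Proof.
  intros r r' Hprec F.
  induction F as [o|o|J f IH|J f IH]; simpl.
  - apply prec_mu_top, Hprec.
  - apply prec_mu_bot, Hprec.
  - intros [j Hj]. exists j. apply IH, Hj.
  - intros Hall j. apply IH, Hall.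
Qed.

End Modalities.

Theorem proposition4p19 (S : signature) (M : Type)
  (sem : M -> tree S unit -> Prop) :
  upwards_closed sem -> strongly_decomposable sem -> decomposable sem.
Proof.
  intros Hup Hsdec.
  apply strongly_decomposable_decomposable; [|exact Hsdec].
  apply upwards_closed_bisim, Hup.
Qed.
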